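(* Let ${}^*\mathbb{Q}$ be a field elementarily equivalent to $\mathbb{Q}$ (in the ring language), with ${}^*\mathbb{Z}$, ${}^*\mathbb{N}$, $\mathcal{P}({}^*\mathbb{N})$, the maps $d_p$ and the order $<$ as described in the context. For $a_0,a_1\in{}^*\mathbb{Q}\setminus\{0\}$, we have $a_0=a_1$ if and only if $d_p(a_0)=d_p(a_1)$ for all $p\in\mathcal{P}({}^*\mathbb{N})$ and $a_0a_1>0$. Equivalently, the map ${}^*\mathbb{Q}\setminus\{0\}\to\prod_{p\in\mathcal{P}({}^*\mathbb{N})}p^{{}^*\mathbb{Z}}\times\{\pm1\}$, $a\mapsto((d_p(a))_p,\operatorname{sgn}(a))$, is an injective group homomorphism, where $\operatorname{sgn}(a)=1$ if $a>0$ and $-1$ if $a<0$.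
   Context: Fix a first-order formula $Z(x)$ in the ring language defining $\mathbb{Z}$ in $\mathbb{Q}$ (such exists by J. Robinson). Let ${}^*\mathbb{Z}=Z({}^*\mathbb{Q})$ and let ${}^*\mathbb{N}$ be the set of elements of ${}^*\mathbb{Q}$ that are sums of four squares of elements of ${}^*\mathbb{Z}$. For $x,y\in{}^*\mathbb{Z}$, $x\mid y$ means $y=zx$ for some $z\in{}^*\mathbb{Z}$, $z\neq0$. $\mathcal{P}({}^*\mathbb{N})$ is the set of $p\in{}^*\mathbb{N}$, $p\ne1$, whose only divisors in ${}^*\mathbb{Z}$ are $\pm1,\pm p$. For such $p$, $p^{{}^*\mathbb{N}}$ is the set of $y\in{}^*\mathbb{N}$ such that $y=1$ or every $z\in{}^*\mathbb{N}$, $z\neq\pm1$, with $z\mid y$ satisfies $p\mid z$; and $p^{{}^*\mathbb{Z}}=p^{{}^*\mathbb{N}}\cup\{1/x:x\in p^{{}^*\mathbb{N}}\}$, a group under multiplication. For $x\in{}^*\mathbb{Z}\setminus\{0\}$, $d_p(x)$ is the unique $y\in p^{{}^*\mathbb{N}}$ with $y\mid x$ and $py\nmid x$; it is extended to ${}^*\mathbb{Q}\setminus\{0\}$ by $d_p(a/b)=d_p(a)/d_p(b)$ for $a,b\in{}^*\mathbb{Z}\setminus\{0\}$. The order on ${}^*\mathbb{Q}$: for $a_1,a_2\in{}^*\mathbb{Z}$ and $b_1,b_2\in{}^*\mathbb{N}\setminus\{0\}$, $a_1/b_1<a_2/b_2$ iff $a_2b_1-a_1b_2\in{}^*\mathbb{N}$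 (and they are distinct). *)

From HB Require Import structures.
From mathcomp Require Import all_boot all_order all_algebra.
From Stdlib Require Import ClassicalEpsilon.
Set Implicit Arguments. Unset Strict Implicit. Unset Printing Implicit Defensive.
Import Order.TTheory GRing.Theory Num.Theory.
Local Open Scope ring_scope.

(* Sentences/formulas of the pure ring language: MathComp's reified formulas
   with constants ranging over the empty type (so no parameters).           *)
Definition of_empty (T : Type) (e : Empty_set) : T := match e with end.

Fixpoint tmap (A B : Type) (f : A -> B) (t : GRing.term A) : GRing.term B :=
  match t with
  | GRing.Var n => @GRing.Var B n
  | GRing.Const x => @GRing.Const B (f x)
  | GRing.NatConst n => @GRing.NatConst B n
  | GRing.Add t1 t2 => GRing.Add (tmap f t1) (tmap f t2)
  | GRing.Opp t1 => GRing.Opp (tmap f t1)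
  | GRing.NatMul t1 n => GRing.NatMul (tmap f t1) n
  | GRing.Mul t1 t2 => GRing.Mul (tmap f t1) (tmap f t2)
  | GRing.Inv t1 => GRing.Inv (tmap f t1)
  | GRing.Exp t1 n => GRing.Exp (tmap f t1) n
  end.

Fixpoint fmap (A B : Type) (f : A -> B) (g : GRing.formula A) : GRing.formula B :=
  match g with
  | GRing.Bool b => @GRing.Bool B b
  | GRing.Equal t1 t2 => GRing.Equal (tmap f t1) (tmap f t2)
  | GRing.Unit t1 => GRing.Unit (tmap f t1)
  | GRing.And g1 g2 => GRing.And (fmap f g1) (fmap f g2)
  | GRing.Or g1 g2 => GRing.Or (fmap f g1) (fmap f g2)
  | GRing.Implies g1 g2 => GRing.Implies (fmap f g1) (fmap f g2)
  | GRing.Not g1 => GRing.Not (fmap f g1)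
  | GRing.Exists n g1 => GRing.Exists n (fmap f g1)
  | GRing.Forall n g1 => GRing.Forall n (fmap f g1)
  end.

Definition ring_formula := GRing.formula Empty_set.

Definition sat (R : unitRingType) (e : seq R) (phi : ring_formula) : Prop :=
  GRing.holds e (fmap (@of_empty R) phi).

Definition elem_equiv_Q (F : fieldType) : Prop :=
  forall phi : ring_formula, sat (R := F) [::] phi <-> sat (R := rat) [::] phi.

Definition defines_Z_in_Q (Zf : ring_formula) : Prop :=
  forall x : rat, sat [:: x] Zf <-> exists z : int, x = z%:~R.

Section StarQ.
Variables (F : fieldType) (Zf : ring_formula).

Definition sZ (x : F) : Prop := sat [:: x] Zf.

Definition sN (x : F) : Prop :=
  exists a b c d, [/\ sZ a, sZ b, sZ c & sZ d] /\
                  x = a ^+ 2 + b ^+ 2 + c ^+ 2 + d ^+ 2.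

Definition sdvd (x y : F) : Prop :=
  sZ x /\ sZ y /\ exists z, sZ z /\ z != 0 /\ y = z * x.

Definition sprime (p : F) : Prop :=
  sN p /\ p != 1 /\
  forall d, sZ d -> sdvd d p -> d = 1 \/ d = -1 \/ d = p \/ d = - p.

Definition spowN (p y : F) : Prop :=
  sN y /\ (y = 1 \/ forall z, sN z -> z != 1 -> z != -1 -> sdvd z y -> sdvd p z).

Definition dpZ (p x : F) : F :=
  epsilon (inhabits 0) (fun y => spowN p y /\ sdvd y x /\ ~ sdvd (p * y) x).

Definition dp (p a : F) : F :=
  let ab := epsilon (inhabits (0, 0))
              (fun ab : F * F => [/\ sZ ab.1, sZ ab.2, ab.1 != 0, ab.2 != 0
                                  & a = ab.1 / ab.2]) in
  dpZ p ab.1 / dpZ p ab.2.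

Definition slt (x y : F) : Prop :=
  exists a1 b1 a2 b2,
    [/\ sZ a1, sZ a2, sN b1 /\ b1 != 0, sN b2 /\ b2 != 0 &
        x = a1 / b1 /\ y = a2 / b2] /\
    sN (a2 * b1 - a1 * b2) /\ x != y.

End StarQ.

From Pilot Require Import Defs.
From HB Require Import structures.
From mathcomp Require Import all_boot all_order all_algebra.
From mathcomp Require Import zify ring lra.
From Stdlib Require Import ClassicalEpsilon Morphisms_Prop.
Set Implicit Arguments. Unset Strict Implicit. Unset Printing Implicit Defensive.
Import Order.TTheory GRing.Theory Num.Theory.
Local Open Scope ring_scope.

(* Each direction of the equivalence, together with the facts that make d_p
   meaningful, is a first-order property of *Q in the ring language once *Z is
   given by Z(x): nonzero squares are positive, every element is a quotient of
   nonzero elements of *Z, d_p(x) exists for every *prime p and nonzero x in *Z,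
   and two such quotients with equal d_p for every *prime p and positive product
   coincide.  Written as sentences, these transfer from Q, where *N = N by
   Lagrange's four-square theorem, the nonzero *primes are the primes, d_p(x) is
   p^(v_p x), the order is the usual one, and the last property is unique
   factorisation together with the sign. *)

(** * Lagrange's four-square theorem *)

Definition sqsum4 (R : pzSemiRingType) (a b c d : R) : R := a ^+ 2 + b ^+ 2 + c ^+ 2 + d ^+ 2.

Lemma euler_four_squares (R : comPzRingType) (a1 a2 a3 a4 b1 b2 b3 b4 : R) :
  sqsum4 a1 a2 a3 a4 * sqsum4 b1 b2 b3 b4 =
  sqsum4 (a1 * b1 + a2 * b2 + a3 * b3 + a4 * b4) (a1 * b2 - a2 * b1 + a3 * b4 - a4 * b3)
         (a1 * b3 - a3 * b1 + a4 * b2 - a2 * b4) (a1 * b4 - a4 * b1 + a2 * b3 - a3 * b2).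
Proof. rewrite /sqsum4; ring. Qed.

Lemma sqsum4_ge0 (a b c d : int) : 0 <= sqsum4 a b c d.
Proof. by rewrite /sqsum4 !addr_ge0 ?sqr_ge0. Qed.

Lemma prime_neq_mul (p : nat) (M s : int) : prime p -> 1 < M < p%:Z -> p%:Z <> M * s.
Proof.
move=> pp /andP[M_gt1 M_ltp] hs.
have M_dvd_p : (`|M| %| `|p%:Z|)%N by rewrite -dvdzE; apply/dvdzP; exists s; lia.
have M_ne1 : `|M|%N != 1%N by lia.
by move: M_dvd_p => /(prime_nt_dvdP pp M_ne1); lia.
Qed.

Lemma centered_residue (M x : int) : 0 < M ->
  exists y t, [/\ x = y + M * t, 4 * y ^+ 2 <= M ^+ 2 & 4 * y ^+ 2 = M ^+ 2 -> M = 2 * y].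
Proof.
move=> M_gt0; pose k := ((M - 1) %/ 2)%Z.
have hk : 2 * k + 1 <= M <= 2 * k + 2 by rewrite /k; lia.
exists (modz (x + k) M - k), (divz (x + k) M).
have := divz_eq (x + k) M; have := @modz_ge0 (x + k) M (lt0r_neq0 M_gt0).
have := ltz_pmod (x + k) M_gt0.
move: (divz (x + k) M) (modz (x + k) M) => t r r_ltM r_ge0 ex.
have -> : 4 * (r - k) ^+ 2 = M ^+ 2 - (M - 2 * (r - k)) * (M + 2 * (r - k)) by ring.
have h1 : 0 <= M - 2 * (r - k) by lia.
have h2 : 0 <= M + 2 * (r - k) by lia.
split; first lia.
- by rewrite gerBl mulr_ge0.
- move/eqP; rewrite subr_eq addrC -subr_eq subrr eq_sym mulf_eq0; lia.
Qed.

Lemma sqsum4_eq0 (a b c d : int) : sqsum4 a b c d = 0 -> [/\ a = 0, b = 0, c = 0 & d = 0].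
Proof.
rewrite /sqsum4 => h; have := sqr_ge0 a; have := sqr_ge0 b; have := sqr_ge0 c.
have := sqr_ge0 d; have sq0 (z : int) : z ^+ 2 = 0 -> z = 0 by move/eqP; rewrite sqrf_eq0 => /eqP.
by split; apply: sq0; lia.
Qed.

Lemma euler_four_squares_residue (R : comPzRingType) (M r y1 y2 y3 y4 t1 t2 t3 t4 : R) :
  sqsum4 y1 y2 y3 y4 = M * r ->
  sqsum4 (y1 + M * t1) (y2 + M * t2) (y3 + M * t3) (y4 + M * t4) * sqsum4 y1 y2 y3 y4 =
  M ^+ 2 * sqsum4 (r + (t1 * y1 + t2 * y2 + t3 * y3 + t4 * y4))
    (t1 * y2 - t2 * y1 + t3 * y4 - t4 * y3) (t1 * y3 - t3 * y1 + t4 * y2 - t2 * y4)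
    (t1 * y4 - t4 * y1 + t2 * y3 - t3 * y2).
Proof.
move=> hr; transitivity (sqsum4 (sqsum4 y1 y2 y3 y4 + M * (t1 * y1 + t2 * y2 + t3 * y3 + t4 * y4))
  (M * (t1 * y2 - t2 * y1 + t3 * y4 - t4 * y3)) (M * (t1 * y3 - t3 * y1 + t4 * y2 - t2 * y4))
  (M * (t1 * y4 - t4 * y1 + t2 * y3 - t3 * y2))).
  by rewrite euler_four_squares /sqsum4; ring.
by rewrite hr /sqsum4; ring.
Qed.

Lemma four_squares_descent (p : nat) (M x1 x2 x3 x4 : int) :
  prime p -> 1 < M < p%:Z -> sqsum4 x1 x2 x3 x4 = M * p%:Z ->
  exists r w1 w2 w3 w4, 0 < r < M /\ sqsum4 w1 w2 w3 w4 = r * p%:Z.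
Proof.
move=> pp M_bnd hx; have M_gt0 : 0 < M by lia.
have [y1 [t1 [e1 b1 c1]]] := centered_residue x1 M_gt0.
have [y2 [t2 [e2 b2 c2]]] := centered_residue x2 M_gt0.
have [y3 [t3 [e3 b3 c3]]] := centered_residue x3 M_gt0.
have [y4 [t4 [e4 b4 c4]]] := centered_residue x4 M_gt0.
have [r hr] : exists r, sqsum4 y1 y2 y3 y4 = M * r.
  exists (p%:Z - 2 * (x1 * t1 + x2 * t2 + x3 * t3 + x4 * t4) + M * sqsum4 t1 t2 t3 t4).
  have -> : sqsum4 y1 y2 y3 y4 = sqsum4 x1 x2 x3 x4
      - M * (2 * (x1 * t1 + x2 * t2 + x3 * t3 + x4 * t4) - M * sqsum4 t1 t2 t3 t4).
    by rewrite e1 e2 e3 e4 /sqsum4; ring.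
  by rewrite hx; ring.
have r_ge0 : 0 <= r by rewrite -(pmulr_rge0 _ M_gt0) -hr sqsum4_ge0.
have r_le_M : r <= M.
  by rewrite -(ler_pM2l M_gt0) -hr /sqsum4 -expr2; clear -b1 b2 b3 b4; lia.
have r_neq0 : r != 0.
  apply/eqP=> r0; move: hr; rewrite r0 mulr0 => /sqsum4_eq0[y10 y20 y30 y40].
  apply: (prime_neq_mul (s := sqsum4 t1 t2 t3 t4) pp M_bnd).
  apply: (mulfI (lt0r_neq0 M_gt0)); rewrite -hx e1 e2 e3 e4 y10 y20 y30 y40 /sqsum4; ring.
have r_neqM : r != M.
  apply/eqP=> rM; move: hr; rewrite rM /sqsum4 -expr2 => hr.
  have [{}c1 {}c2 {}c3 {}c4] : [/\ M = 2 * y1, M = 2 * y2, M = 2 * y3 & M = 2 * y4].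
    by split; [apply: c1 | apply: c2 | apply: c3 | apply: c4]; clear -hr b1 b2 b3 b4; lia.
  pose s := 1 + t1 * (t1 + 1) + t2 * (t2 + 1) + t3 * (t3 + 1) + t4 * (t4 + 1).
  apply: (prime_neq_mul (s := s) pp M_bnd).
  apply: (mulfI (lt0r_neq0 M_gt0)); rewrite -hx e1 e2 e3 e4.
  have -> : y2 = y1 by clear -c1 c2; lia.
  have -> : y3 = y1 by clear -c1 c3; lia.
  have -> : y4 = y1 by clear -c1 c4; lia.
  by rewrite c1 /sqsum4 /s; ring.
have := euler_four_squares_residue t1 t2 t3 t4 hr; rewrite -e1 -e2 -e3 -e4 hx hr => euler.
eexists r, _, _, _, _; split; first by clear -r_ge0 r_neq0 r_le_M r_neqM; lia.
by apply: (mulfI (expf_neq0 2 (lt0r_neq0 M_gt0))); apply: etrans (esym euler) _; ring.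
Qed.

Lemma Fp_sqr_inj (p h a b : nat) : prime p -> p = (2 * h).+1 -> (a <= h)%N -> (b <= h)%N ->
  (a%:R : 'F_p) ^+ 2 = b%:R ^+ 2 -> a = b.
Proof.
move=> pp hp ha hb e.
have val_eq (m n : nat) : (m%:R : 'F_p) = n%:R -> (m %% p = n %% p)%N.
  by move=> /(congr1 (@nat_of_ord _)); rewrite !(val_Fp_nat pp).
have : ((a%:R : 'F_p) - b%:R) * (a%:R + b%:R) = 0 by rewrite -subr_sqr e subrr.
move/eqP; rewrite mulf_eq0 subr_eq0 -natrD => /orP[] /eqP => [/val_eq|/(val_eq _ 0%N)];
  rewrite !modn_small; lia.
Qed.

Lemma prime_dvd_sqsum2_plus1 (p h : nat) : prime p -> p = (2 * h).+1 ->
  exists x y : nat, [/\ (x <= h)%N, (y <= h)%N & (p %| x ^ 2 + y ^ 2 + 1)%N].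
Proof.
move=> pp hp.
pose f (x : 'I_h.+1) : 'F_p := (x : nat)%:R ^+ 2.
pose g (x : 'I_h.+1) : 'F_p := - 1 - (x : nat)%:R ^+ 2.
have f_inj : injective f.
  by move=> x y /(Fp_sqr_inj pp hp (ltn_ord x) (ltn_ord y)) /val_inj.
have g_inj : injective g.
  by move=> x y /addrI /oppr_inj /(Fp_sqr_inj pp hp (ltn_ord x) (ltn_ord y)) /val_inj.
have : (0 < #|[set f x | x in 'I_h.+1] :&: [set g x | x in 'I_h.+1]|)%N.
  have := cardsUI [set f x | x in 'I_h.+1] [set g x | x in 'I_h.+1].
  have := max_card (mem ([set f x | x in 'I_h.+1] :|: [set g x | x in 'I_h.+1])).
  rewrite card_Fp // !card_imset // card_ord cardE /=; lia.
rewrite card_gt0 => /set0Pn[_ /setIP[/imsetP[x _ ->] /imsetP[y _ fxgy]]].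
exists x, y; split; [exact: (ltn_ord x) | exact: (ltn_ord y) |].
have : ((x ^ 2 + y ^ 2 + 1)%N%:R : 'F_p) = 0.
  by rewrite !natrD !natrX; move: fxgy; rewrite /f /g => ->; ring.
by move/(congr1 (@nat_of_ord _)); rewrite (val_Fp_nat pp) => /eqP.
Qed.

Lemma four_squares_of_multiple (p : nat) (M : int) (x1 x2 x3 x4 : int) :
  prime p -> 0 < M < p%:Z -> sqsum4 x1 x2 x3 x4 = M * p%:Z ->
  exists a b c d, sqsum4 a b c d = p%:Z.
Proof.
move=> pp; have [n le_Mn] : exists n, (`|M| <= n)%N by exists `|M|%N.
elim: n M x1 x2 x3 x4 le_Mn => [|n IH] M x1 x2 x3 x4 le_Mn M_bnd hx; first lia.
have [M1|M_neq1] := eqVneq M 1; first by exists x1, x2, x3, x4; rewrite hx M1 mul1r.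
have [r [w1 [w2 [w3 [w4 [r_bnd hw]]]]]] := four_squares_descent (M := M) pp ltac:(lia) hx.
by apply: (IH r w1 w2 w3 w4) => //; lia.
Qed.

Lemma four_squares_prime (p : nat) : prime p -> exists a b c d, sqsum4 a b c d = p%:Z.
Proof.
move=> pp; case: (even_prime pp) => [->|p_odd]; first by exists 1, 1, 0, 0.
have [h hp] : exists h, p = (2 * h).+1.
  by exists p./2; rewrite -[p in LHS](odd_double_half p) p_odd; lia.
have [x [y [hx hy /dvdnP[m hm]]]] := prime_dvd_sqsum2_plus1 pp hp.
apply: (four_squares_of_multiple (M := m%:Z) (x1 := x%:Z) (x2 := y%:Z) (x3 := 1) (x4 := 0) pp).
- have := prime_gt1 pp; have := leq_mul hx hx; have := leq_mul hy hy.
  by move: hm; rewrite hp !expnS !expn0 !muln1; nia.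
- by move: hm; rewrite /sqsum4 !expr2 !expnS !expn0 !muln1; lia.
Qed.

Theorem lagrange_four_squares (n : nat) : exists a b c d, sqsum4 a b c d = n%:Z.
Proof.
elim/ltn_ind: n => -[|[|n]] IH; [by exists 0, 0, 0, 0 | by exists 1, 0, 0, 0 |].
have pp : prime (pdiv n.+2) by rewrite pdiv_prime.
have [a1 [a2 [a3 [a4 ha]]]] := four_squares_prime pp.
have [b1 [b2 [b3 [b4 hb]]]] : exists b1 b2 b3 b4, sqsum4 b1 b2 b3 b4 = (n.+2 %/ pdiv n.+2)%N%:Z.
  by apply: IH; rewrite ltn_Pdiv ?prime_gt1 ?pdiv_prime.
rewrite -(divnK (pdiv_dvd n.+2)) mulnC PoszM -ha -hb euler_four_squares.
by eexists _, _, _, _.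
Qed.

(** * Ring-language formulas for *Z, *N, divisibility, *primes, d_p and the order *)

Notation term := (GRing.term Empty_set).
Notation teval e t := (GRing.eval e (tmap (@of_empty _) t)).
Notation holds e f := (GRing.holds e (fmap (@of_empty _) f)).

Section Shift.
Variable A : Type.

Fixpoint term_shift (n : nat) (t : GRing.term A) : GRing.term A :=
  match t with
  | GRing.Var i => @GRing.Var A (i + n)
  | GRing.Const x => GRing.Const x
  | GRing.NatConst k => @GRing.NatConst A k
  | GRing.Add t1 t2 => GRing.Add (term_shift n t1) (term_shift n t2)
  | GRing.Opp t1 => GRing.Opp (term_shift n t1)
  | GRing.NatMul t1 k => GRing.NatMul (term_shift n t1) k
  | GRing.Mul t1 t2 => GRing.Mul (term_shift n t1) (term_shift n t2)
  | GRing.Inv t1 => GRing.Inv (term_shift n t1)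
  | GRing.Exp t1 k => GRing.Exp (term_shift n t1) k
  end.

Fixpoint formula_shift (n : nat) (f : GRing.formula A) : GRing.formula A :=
  match f with
  | GRing.Bool b => @GRing.Bool A b
  | GRing.Equal t1 t2 => GRing.Equal (term_shift n t1) (term_shift n t2)
  | GRing.Unit t1 => GRing.Unit (term_shift n t1)
  | GRing.And f1 f2 => GRing.And (formula_shift n f1) (formula_shift n f2)
  | GRing.Or f1 f2 => GRing.Or (formula_shift n f1) (formula_shift n f2)
  | GRing.Implies f1 f2 => GRing.Implies (formula_shift n f1) (formula_shift n f2)
  | GRing.Not f1 => GRing.Not (formula_shift n f1)
  | GRing.Exists i f1 => GRing.Exists (i + n) (formula_shift n f1)
  | GRing.Forall i f1 => GRing.Forall (i + n) (formula_shift n f1)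
  end.

Fixpoint term_bound (b : nat) (t : GRing.term A) : bool :=
  match t with
  | GRing.Var i => (i < b)%N
  | GRing.Const _ | GRing.NatConst _ => true
  | GRing.Add t1 t2 | GRing.Mul t1 t2 => term_bound b t1 && term_bound b t2
  | GRing.Opp t1 | GRing.NatMul t1 _ | GRing.Inv t1 | GRing.Exp t1 _ => term_bound b t1
  end.

Lemma term_bound_le (a b : nat) (t : GRing.term A) :
  term_bound a t -> (a <= b)%N -> term_bound b t.
Proof.
move=> + le_ab; elim: t => //= [i|t1 IH1 t2 IH2|t1 IH1 t2 IH2].
- by move/leq_trans; apply.
- by case/andP=> /IH1 -> /IH2.
- by case/andP=> /IH1 -> /IH2.
Qed.

End Shift.

Section Evaluation.
Variable R : unitRingType.
Implicit Types (e : seq R) (t : term).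

Lemma teval_shift n t e e' :
  (forall i, nth 0 e (i + n) = nth 0 e' i) -> teval e (term_shift n t) = teval e' t.
Proof. by move=> ee'; elim: t => //= [t1 -> t2 ->|t1 ->|t1 ->|t1 -> t2 ->|t1 ->|t1 ->]. Qed.

Lemma holds_shift n (f : ring_formula) e e' :
  (forall i, nth 0 e (i + n) = nth 0 e' i) -> holds e (formula_shift n f) <-> holds e' f.
Proof.
have shift_set i x e1 e1' : (forall j, nth 0 e1 (j + n) = nth 0 e1' j) ->
    forall j, nth 0 (set_nth 0 e1 (i + n) x) (j + n) = nth 0 (set_nth 0 e1' i x) j.
  by move=> ee1' j; rewrite !nth_set_nth /= eqn_add2r ee1'.
elim: f e e' => //= [t1 t2|t1|f1 IH1 f2 IH2|f1 IH1 f2 IH2|f1 IH1 f2 IH2|f1 IH1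
  |i f1 IH1|i f1 IH1] e e' ee'; rewrite ?(teval_shift _ ee') //.
1-3: by rewrite (IH1 _ _ ee') (IH2 _ _ ee').
- by rewrite (IH1 _ _ ee').
- by split=> -[x hx]; exists x; move: hx; apply IH1; apply: shift_set.
- by split=> hx x; move: (hx x); apply IH1; apply: shift_set.
Qed.

Lemma teval_set_nth b k t e x : term_bound b t -> (b <= k)%N ->
  teval (set_nth 0 e k x) t = teval e t.
Proof.
move=> + le_bk; elim: t => //= [i|t1 IH1 t2 IH2|t1 IH1|t1 IH1 n|t1 IH1 t2 IH2|t1 IH1|t1 IH1 n].
- by move=> lt_ib; rewrite nth_set_nth /=; case: eqP => //; lia.
all: by [move=> /andP[/IH1 -> /IH2 ->] | move=> /IH1 ->].
Qed.

Lemma nth_set_nth_same e k x : nth 0 (set_nth 0 e k x) k = x.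
Proof. by rewrite nth_set_nth /= eqxx. Qed.

Lemma nth_set_nth_other e i k x : i != k -> nth 0 (set_nth 0 e k x) i = nth 0 e i.
Proof. by rewrite nth_set_nth /= => /negbTE ->. Qed.

End Evaluation.

(* The copy of [Zf] in [Zform] is shifted to the variables from [zslot] on, so
   environments must be shorter than [zslot]; the builders taking [s] quantify
   over variables [s], [s.+1], ... which must stay below [zslot]. *)
Definition zslot : nat := 64.

Local Open Scope term_scope.

HB.lock Definition Zform (Zf : ring_formula) (t : term) : ring_formula :=
  'exists 'X_zslot, 'X_zslot == t /\ formula_shift zslot Zf.

HB.lock Definition Nform (Zf : ring_formula) (t : term) (s : nat) : ring_formula :=
  'exists 'X_s, 'exists 'X_(s.+1), 'exists 'X_(s.+2), 'exists 'X_(s.+3),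
    (Zform Zf 'X_s /\ Zform Zf 'X_(s.+1) /\ Zform Zf 'X_(s.+2) /\ Zform Zf 'X_(s.+3)) /\
    t == 'X_s ^+ 2 + 'X_(s.+1) ^+ 2 + 'X_(s.+2) ^+ 2 + 'X_(s.+3) ^+ 2.

HB.lock Definition Dvdform (Zf : ring_formula) (t u : term) (s : nat) : ring_formula :=
  Zform Zf t /\ Zform Zf u /\ 'exists 'X_s, Zform Zf 'X_s /\ 'X_s != 0 /\ u == 'X_s * t.

HB.lock Definition Primeform (Zf : ring_formula) (t : term) (s : nat) : ring_formula :=
  Nform Zf t s /\ t != 1 /\
  'forall 'X_s, Zform Zf 'X_s ==> Dvdform Zf 'X_s t s.+1 ==>
     ('X_s == 1 \/ 'X_s == GRing.Opp 1 \/ 'X_s == t \/ 'X_s == - t).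

HB.lock Definition Powform (Zf : ring_formula) (p y : term) (s : nat) : ring_formula :=
  Nform Zf y s /\
  (y == 1 \/ 'forall 'X_s, Nform Zf 'X_s s.+1 ==> ('X_s != 1) ==> ('X_s != GRing.Opp 1) ==>
                           Dvdform Zf 'X_s y s.+1 ==> Dvdform Zf p 'X_s s.+1).

HB.lock Definition Dpform (Zf : ring_formula) (p x y : term) (s : nat) : ring_formula :=
  Powform Zf p y s /\ Dvdform Zf y x s /\ ~ Dvdform Zf (p * y) x s.

HB.lock Definition Ltform (Zf : ring_formula) (t u : term) (s : nat) : ring_formula :=
  'exists 'X_s, 'exists 'X_(s.+1), 'exists 'X_(s.+2), 'exists 'X_(s.+3),
    (Zform Zf 'X_s /\ Zform Zf 'X_(s.+2) /\ (Nform Zf 'X_(s.+1) s.+4 /\ 'X_(s.+1) != 0) /\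
     (Nform Zf 'X_(s.+3) s.+4 /\ 'X_(s.+3) != 0) /\ (t == 'X_s / 'X_(s.+1) /\ u == 'X_(s.+2) / 'X_(s.+3))) /\
    Nform Zf ('X_(s.+2) * 'X_(s.+1) - 'X_s * 'X_(s.+3)) s.+4 /\ t != u.

Local Close Scope term_scope.

Definition is_dpZ (R : fieldType) (Zf : ring_formula) (p x y : R) : Prop :=
  spowN Zf p y /\ Defs.sdvd Zf y x /\ ~ Defs.sdvd Zf (p * y) x.

Section Semantics.
Variables (R : fieldType) (Zf : ring_formula).
Implicit Types (e : seq R) (t u : term).

Ltac nth_simpl := repeat first [rewrite nth_set_nth_same | rewrite nth_set_nth_other; last lia].
Ltac side := rewrite ?size_set_nth /= ?andbT; lia.

Lemma holds_Zform e t : (size e <= zslot)%N -> term_bound zslot t ->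
  holds e (Zform Zf t) <-> sZ Zf (teval e t).
Proof.
move=> e_small tb; rewrite Zform.unlock /=.
have shiftP x : holds (set_nth 0 e zslot x) (formula_shift zslot Zf) <-> holds [:: x] Zf.
  apply: holds_shift => -[|i]; first by rewrite add0n nth_set_nth_same.
  by rewrite nth_set_nth_other ?nth_default //=; lia.
rewrite /sZ /sat; split=> [[x []]|hZ].
  by rewrite nth_set_nth_same (teval_set_nth _ _ tb) // => -> /shiftP.
by exists (teval e t); rewrite nth_set_nth_same (teval_set_nth _ _ tb) //; split=> //; apply/shiftP.
Qed.

Lemma holds_Nform e t s : (size e <= zslot)%N -> term_bound s t -> (s.+4 <= zslot)%N ->
  holds e (Nform Zf t s) <-> sN Zf (teval e t).
Proof.
move=> e_small tb s_small; rewrite Nform.unlock /= /sN.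
do 4 apply: ex_iff_morphism => ?.
rewrite !holds_Zform /=; try side.
nth_simpl; rewrite !(teval_set_nth _ _ tb); try lia.
by split=> [[[? [? [? ?]]] ?]|[[? ? ? ?] ?]].
Qed.

Lemma holds_Dvdform e t u s : (size e <= zslot)%N -> term_bound s t -> term_bound s u ->
  (s < zslot)%N -> holds e (Dvdform Zf t u s) <-> Defs.sdvd Zf (teval e t) (teval e u).
Proof.
move=> e_small tb ub s_small.
have zb v : term_bound s v -> term_bound zslot v by move/term_bound_le; apply; lia.
rewrite Dvdform.unlock /= /Defs.sdvd !holds_Zform ?zb //.
do 2 apply: and_iff_morphism => //; apply: ex_iff_morphism => z.
rewrite holds_Zform /=; try side.
nth_simpl; rewrite (teval_set_nth _ _ tb) ?(teval_set_nth _ _ ub) //.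
by split=> -[? [z0 ?]]; split=> //; split=> //; apply/eqP.
Qed.

Lemma holds_Primeform e t s : (size e <= zslot)%N -> term_bound s t -> (s + 5 <= zslot)%N ->
  holds e (Primeform Zf t s) <-> sprime Zf (teval e t).
Proof.
move=> e_small tb s_small; rewrite Primeform.unlock /= /sprime holds_Nform //; try lia.
apply: and_iff_morphism => //; apply: and_iff_morphism; first by split=> ?; apply/eqP.
apply: all_iff_morphism => d.
rewrite holds_Zform ?holds_Dvdform /=; try side; last exact: term_bound_le tb _.
by nth_simpl; rewrite (teval_set_nth _ _ tb) ?mulr1n.
Qed.

Lemma holds_Powform e p y s : (size e <= zslot)%N -> term_bound s p -> term_bound s y ->
  (s + 5 <= zslot)%N -> holds e (Powform Zf p y s) <-> spowN Zf (teval e p) (teval e y).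
Proof.
move=> e_small pb yb s_small.
have [pb1 yb1] : term_bound s.+1 p /\ term_bound s.+1 y.
  by split; apply: term_bound_le (leqnSn s).
rewrite Powform.unlock /= /spowN holds_Nform //; try lia.
apply: and_iff_morphism => //; apply: or_iff_morphism; first by rewrite mulr1n.
apply: all_iff_morphism => z.
rewrite holds_Nform ?holds_Dvdform /=; try side.
nth_simpl; rewrite (teval_set_nth _ _ pb) ?(teval_set_nth _ _ yb) ?mulr1n //.
by split=> h ? z1 z_1; apply: h => //; apply/eqP.
Qed.

Lemma holds_Dpform e p x y s : (size e <= zslot)%N ->
  term_bound s p -> term_bound s x -> term_bound s y -> (s + 5 <= zslot)%N ->
  holds e (Dpform Zf p x y s) <-> is_dpZ Zf (teval e p) (teval e x) (teval e y).
Proof.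
move=> e_small pb xb yb s_small.
by rewrite Dpform.unlock /= holds_Powform ?holds_Dvdform //= ?pb ?yb //; lia.
Qed.

Lemma holds_Ltform e t u s : (size e <= zslot)%N -> term_bound s t -> term_bound s u ->
  (s + 8 <= zslot)%N -> holds e (Ltform Zf t u s) <-> slt Zf (teval e t) (teval e u).
Proof.
move=> e_small tb ub s_small; rewrite Ltform.unlock /= /slt.
do 4 apply: ex_iff_morphism => ?.
rewrite !holds_Zform ?holds_Nform /=; try side.
nth_simpl; rewrite !(teval_set_nth _ _ tb) ?(teval_set_nth _ _ ub); try lia.
split=> [[[? [? [[? /eqP ?] [[? /eqP ?] [? ?]]]]] [? /eqP ?]]|[[? ? [? ?] [? ?] [? ?]] [? ?]]].
  by do !split.
by do !split=> //; apply/eqP.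
Qed.

End Semantics.

(** * Four first-order properties of *Q *)

Definition squares_pos (Zf : ring_formula) (R : fieldType) : Prop :=
  forall a : R, a != 0 -> slt Zf 0 (a * a).

Definition sZ_fractions (Zf : ring_formula) (R : fieldType) : Prop :=
  forall a : R, a != 0 -> exists u v, [/\ sZ Zf u, sZ Zf v, u != 0, v != 0 & a = u / v].

Definition dpZ_total (Zf : ring_formula) (R : fieldType) : Prop :=
  forall p : R, sprime Zf p -> forall x, sZ Zf x -> x != 0 -> exists y, is_dpZ Zf p x y.

Definition dpZ_sign_injective (Zf : ring_formula) (R : fieldType) : Prop :=
  forall u0 v0 u1 v1 : R, [/\ sZ Zf u0, sZ Zf v0, sZ Zf u1 & sZ Zf v1] ->
    [/\ u0 != 0, v0 != 0, u1 != 0 & v1 != 0] ->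
    (forall p, sprime Zf p -> exists y0 z0 y1 z1,
       [/\ is_dpZ Zf p u0 y0, is_dpZ Zf p v0 z0, is_dpZ Zf p u1 y1, is_dpZ Zf p v1 z1
         & y0 / z0 = y1 / z1]) ->
    slt Zf 0 (u0 / v0 * (u1 / v1)) -> u0 / v0 = u1 / v1.

Lemma transfer (F : fieldType) (phi : ring_formula) (P : fieldType -> Prop) :
  elem_equiv_Q F -> (forall R : fieldType, sat (R := R) [::] phi <-> P R) -> P rat -> P F.
Proof. by move=> hF hP /hP /(hF phi) /hP. Qed.

Section Sentences.
Variables (Zf : ring_formula) (R : fieldType).

Ltac side := rewrite ?size_set_nth /zslot /= ?andbT; lia.

Definition squares_pos_sentence : ring_formula :=
  ('forall 'X_0, ('X_0 != 0) ==> Ltform Zf 0 ('X_0 * 'X_0) 1)%T.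

Lemma squares_pos_sentenceP : sat (R := R) [::] squares_pos_sentence <-> squares_pos Zf R.
Proof.
rewrite /sat /=; apply: all_iff_morphism => a; rewrite holds_Ltform /=; try side.
by rewrite mulr0n; split=> h /eqP; apply: h.
Qed.

Definition sZ_fractions_sentence : ring_formula :=
  ('forall 'X_0, ('X_0 != 0) ==> 'exists 'X_1, 'exists 'X_2,
    Zform Zf 'X_1 /\ Zform Zf 'X_2 /\ ('X_1 != 0) /\ ('X_2 != 0) /\ 'X_0 == 'X_1 / 'X_2)%T.

Lemma sZ_fractions_sentenceP :
  sat (R := R) [::] sZ_fractions_sentence <-> sZ_fractions Zf R.
Proof.
rewrite /sat /=; apply: all_iff_morphism => a.
apply: iff_iff_iff_impl_morphism; first by split=> /eqP.
do 2 apply: ex_iff_morphism => ?.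
rewrite !holds_Zform /=; try side.
by split=> [[? [? [/eqP ? [/eqP ? ?]]]]|[? ? /eqP ? /eqP ? ?]].
Qed.

Definition dpZ_total_sentence : ring_formula :=
  ('forall 'X_0, Primeform Zf 'X_0 3 ==> 'forall 'X_1, Zform Zf 'X_1 ==> ('X_1 != 0) ==>
    'exists 'X_2, Dpform Zf 'X_0 'X_1 'X_2 3)%T.

Lemma dpZ_total_sentenceP : sat (R := R) [::] dpZ_total_sentence <-> dpZ_total Zf R.
Proof.
rewrite /sat /=; apply: all_iff_morphism => p; rewrite holds_Primeform /=; try side.
apply: iff_iff_iff_impl_morphism => //; apply: all_iff_morphism => x.
rewrite holds_Zform /=; try side.
apply: iff_iff_iff_impl_morphism => //; apply: iff_iff_iff_impl_morphism; first by split=> /eqP.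
by apply: ex_iff_morphism => y; rewrite holds_Dpform /=; try side.
Qed.

Definition dpZ_sign_injective_sentence : ring_formula :=
  ('forall 'X_0, 'forall 'X_1, 'forall 'X_2, 'forall 'X_3,
    (Zform Zf 'X_0 /\ Zform Zf 'X_1 /\ Zform Zf 'X_2 /\ Zform Zf 'X_3) ==>
    (('X_0 != 0) /\ ('X_1 != 0) /\ ('X_2 != 0) /\ ('X_3 != 0)) ==>
    ('forall 'X_4, Primeform Zf 'X_4 10 ==>
      'exists 'X_5, 'exists 'X_6, 'exists 'X_7, 'exists 'X_8,
        Dpform Zf 'X_4 'X_0 'X_5 10 /\ Dpform Zf 'X_4 'X_1 'X_6 10 /\
        Dpform Zf 'X_4 'X_2 'X_7 10 /\ Dpform Zf 'X_4 'X_3 'X_8 10 /\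
        'X_5 / 'X_6 == 'X_7 / 'X_8) ==>
    Ltform Zf 0 ('X_0 / 'X_1 * ('X_2 / 'X_3)) 10 ==>
    ('X_0 / 'X_1 == 'X_2 / 'X_3))%T.

Lemma dpZ_sign_injective_sentenceP :
  sat (R := R) [::] dpZ_sign_injective_sentence <-> dpZ_sign_injective Zf R.
Proof.
rewrite /sat /=; do 4 apply: all_iff_morphism => ?.
rewrite !holds_Zform ?holds_Ltform /=; try side; rewrite mulr0n.
apply: iff_iff_iff_impl_morphism; first by split=> [[? [? [? ?]]]|[? ? ? ?]].
apply: iff_iff_iff_impl_morphism.
  by split=> [[/eqP ? [/eqP ? [/eqP ? /eqP ?]]]|[/eqP ? /eqP ? /eqP ? /eqP ?]].
apply: iff_iff_iff_impl_morphism => //; apply: all_iff_morphism => p.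
rewrite holds_Primeform /=; try side.
apply: iff_iff_iff_impl_morphism => //; do 4 apply: ex_iff_morphism => ?.
rewrite !holds_Dpform /=; try side.
by split=> [[? [? [? [? ?]]]]|[? ? ? ? ?]].
Qed.

End Sentences.

(** * The four properties in Q *)

Lemma eq_of_norm_eq_mul_gt0 (R : realDomainType) (x y : R) : `|x| = `|y| -> 0 < x * y -> x = y.
Proof.
move=> nxy; case: (ltrgt0P x) => [x_gt0|x_lt0|->]; last by rewrite mul0r ltxx.
  by rewrite pmulr_rgt0 // => y_gt0; move: nxy; rewrite !gtr0_norm.
by rewrite nmulr_rgt0 // => y_lt0; move: nxy; rewrite !ltr0_norm // => /oppr_inj.
Qed.

Section Rationals.
Variable Zf : ring_formula.
Hypothesis hZ : defines_Z_in_Q Zf.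

Lemma sZ_int (z : int) : sZ Zf (z%:~R : rat).
Proof. by apply/hZ; exists z. Qed.

Lemma sN_ratP (x : rat) : sN Zf x <-> exists n : nat, x = n%:R.
Proof.
split=> [[a [b [c [d [[/hZ[a' ->] /hZ[b' ->] /hZ[c' ->] /hZ[d' ->]] ->]]]]]|[n ->]].
  exists `|sqsum4 a' b' c' d'|%N.
  by rewrite natr_absz ger0_norm ?sqsum4_ge0 // /sqsum4 !rmorphD !rmorphXn.
have [a [b [c [d abcd]]]] := lagrange_four_squares n.
exists a%:~R, b%:~R, c%:~R, d%:~R; split; first by split; apply: sZ_int.
by rewrite -[n%:R]/(n%:Z%:~R) -abcd /sqsum4 !rmorphD !rmorphXn.
Qed.

Lemma sdvd_intP (d z : int) : z != 0 -> Defs.sdvd Zf (d%:~R : rat) z%:~R <-> (d %| z)%Z.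
Proof.
move=> z0; split=> [[_ [_ [w [/hZ[w' ->] [_ zwd]]]]]|/dvdzP[w zwd]].
  by apply/dvdzP; exists w'; apply: (@intr_inj rat); rewrite zwd intrM.
split; [exact: sZ_int | split; [exact: sZ_int | exists w%:~R]].
split; [exact: sZ_int | split; last by rewrite zwd intrM].
by rewrite intr_eq0; apply: contraNneq z0 => w0; rewrite zwd w0 mul0r.
Qed.

Lemma sdvd_natP (m n : nat) : (0 < n)%N -> Defs.sdvd Zf (m%:R : rat) n%:R <-> (m %| n)%N.
Proof.
by move=> n_gt0; rewrite -[m%:R]/(m%:Z%:~R) -[n%:R]/(n%:Z%:~R) sdvd_intP // eqz_nat -lt0n.
Qed.

Lemma slt_ratP (x y : rat) : slt Zf x y <-> x < y.
Proof.
split=> [[a1 [b1 [a2 [b2 [[_ _ [/sN_ratP[n1 ->] n1_0] [/sN_ratP[n2 ->] n2_0] [-> ->]]]]]]]|lt_xy].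
  move=> [/sN_ratP[n ab_n] neq]; rewrite lt_def eq_sym neq /= -subr_ge0.
  have -> : a2 / n2%:R - a1 / n1%:R = (a2 * n1%:R - a1 * n2%:R) / (n1%:R * n2%:R).
    by field; rewrite n1_0 n2_0.
  by rewrite ab_n divr_ge0 ?mulr_ge0.
have den_sN (r : rat) : sN Zf ((denq r)%:~R : rat) /\ (denq r)%:~R != 0 :> rat.
  split; last by rewrite intr_eq0 denq_neq0.
  by apply/sN_ratP; exists `|denq r|%N; rewrite natr_absz gtr0_norm.
exists (numq x)%:~R, (denq x)%:~R, (numq y)%:~R, (denq y)%:~R.
split; first by split; [exact: sZ_int | exact: sZ_int | exact: den_sN | exact: den_sN
                       | rewrite !divq_num_den].
split; last by rewrite lt_eqF.
apply/sN_ratP; exists `|(numq y * denq x - numq x * denq y)%R|%N.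
rewrite natr_absz ger0_norm -?intrM -?intrB // subr_ge0 ltW //.
by move: lt_xy; rewrite -[x < y]/(lt_rat x y) lt_ratE.
Qed.

(* [0] is a *prime as well: its only divisor in *Z is [0] itself. *)
Lemma sprime_rat (p : rat) : sprime Zf p -> p = 0 \/ exists2 q, prime q & p = q%:R.
Proof.
move=> [/sN_ratP[n ->] [n_neq1 p_div]].
have [->|n_gt0] := posnP n; [by left | right; exists n => //].
apply/primeP; split=> [|d /(sdvd_natP _ n_gt0) /(p_div _ (sZ_int d))].
  by move: n_neq1; rewrite pnatr_eq1; lia.
have d_ge0 : 0 <= d%:Z%:~R :> rat := ler0n rat d.
have n_gt0' : 0 < n%:R :> rat by rewrite ltr0n.
case=> [|[d_1|[|d_n]]].
- by move/eqP; rewrite pnatr_eq1 => ->.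
- by move: d_ge0; rewrite d_1; lra.
- by move/eqP; rewrite eqr_nat => ->; rewrite orbT.
- by move: d_ge0; rewrite d_n; lra.
Qed.

Lemma sprime_nat (q : nat) : prime q -> sprime Zf (q%:R : rat).
Proof.
move=> q_pr; have q_gt1 := prime_gt1 q_pr.
split; first by apply/sN_ratP; exists q.
split; first by rewrite pnatr_eq1; lia.
move=> d /hZ[e ->]; rewrite -[q%:R]/(q%:Z%:~R) sdvd_intP; last by rewrite eqz_nat; lia.
rewrite /dvdz /= => /(primeP q_pr).2 /orP[] /eqP e_q.
- have : e = 1 \/ e = -1 by lia.
  by case=> ->; [left | right; left].
- have : e = q%:Z \/ e = - q%:Z by lia.
  by case=> ->; [right; right; left | do 3 right; rewrite rmorphN].
Qed.

Lemma spowN_natP (q m : nat) : prime q -> (0 < m)%N ->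
  spowN Zf (q%:R : rat) m%:R <-> exists k, m = (q ^ k)%N.
Proof.
move=> q_pr m_gt0; have q_gt0 := prime_gt0 q_pr.
split=> [[_ [/eqP|q_div]]|[k ->]].
- by rewrite pnatr_eq1 => /eqP ->; exists 0%N.
- have [m' q_m' m_eq] := pfactor_coprime q_pr m_gt0.
  exists (logn q m); rewrite [LHS]m_eq; suff -> : m' = 1%N by rewrite mul1n.
  have m'_gt0 : (0 < m')%N by move: m_gt0; rewrite m_eq muln_gt0 => /andP[].
  apply/eqP; apply: contraT => m'_neq1.
  have r_pr : prime (pdiv m') by rewrite pdiv_prime // ltn_neqAle eq_sym m'_neq1.
  have r_dvd_m : (pdiv m' %| m)%N by rewrite m_eq dvdn_mulr ?pdiv_dvd.
  have r_neq1 : (pdiv m')%:R != 1 :> rat by rewrite pnatr_eq1; have := prime_gt1 r_pr; lia.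
  have r_neqN1 : (pdiv m')%:R != -1 :> rat.
    by apply/eqP=> r_N1; have := ler0n rat (pdiv m'); rewrite r_N1; lra.
  have /q_div : Defs.sdvd Zf ((pdiv m')%:R : rat) m%:R by apply/sdvd_natP.
  move=> /(_ (proj2 (sN_ratP _) (ex_intro _ _ erefl)) r_neq1 r_neqN1).
  rewrite sdvd_natP ?prime_gt0 // dvdn_prime2 // => /eqP q_r.
  by move: q_m'; rewrite q_r prime_coprime // pdiv_dvd.
- split; first by apply/sN_ratP; exists (q ^ k)%N.
  right=> z /sN_ratP[n ->] n_neq1 _ /sdvd_natP.
  case/(_ _)/(dvdn_pfactor _ _ q_pr); first by rewrite expn_gt0 q_gt0.
  move=> [|i] _ n_eq; first by rewrite n_eq eqxx in n_neq1.
  by rewrite n_eq sdvd_natP ?expn_gt0 ?q_gt0 // dvdn_exp.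
Qed.

Lemma is_dpZ_ratP (q : nat) (z : int) (y : rat) : prime q -> z != 0 ->
  is_dpZ Zf q%:R z%:~R y <-> y = (q ^ logn q `|z|)%:R.
Proof.
move=> q_pr z_neq0; have z_gt0 : (0 < `|z|)%N by rewrite absz_gt0.
have dvd_pow k : Defs.sdvd Zf ((q ^ k)%:R : rat) z%:~R <-> (k <= logn q `|z|)%N.
  by rewrite -[(q ^ k)%:R]/((q ^ k)%:Z%:~R) sdvd_intP // -pfactor_dvdn.
rewrite /is_dpZ; split=> [[y_pow [y_dvd y_ndvd]]|->].
  have [m y_m] := proj1 (sN_ratP y) y_pow.1; move: y_pow y_dvd y_ndvd; rewrite y_m.
  have m_gt0 : Defs.sdvd Zf (m%:R : rat) z%:~R -> (0 < m)%N.
    by rewrite -[m%:R]/(m%:Z%:~R) sdvd_intP //; apply: dvdn_gt0.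
  move=> + /[dup] /m_gt0 {}m_gt0.
  move=> /(spowN_natP q_pr m_gt0) [k ->]; rewrite dvd_pow -natrM -expnS dvd_pow.
  by move=> k_le k_nlt; have -> : k = logn q `|z| by lia.
have pow_gt0 : (0 < q ^ logn q `|z|)%N by rewrite expn_gt0 prime_gt0.
split; first by apply/(spowN_natP q_pr pow_gt0); exists (logn q `|z|).
by rewrite dvd_pow -natrM -expnS dvd_pow; split=> //; lia.
Qed.

Lemma squares_pos_rat : squares_pos Zf rat.
Proof. by move=> a a_neq0; apply/slt_ratP; rewrite -expr2 exprn_even_gt0 ?a_neq0 ?orbT. Qed.

Lemma sZ_fractions_rat : sZ_fractions Zf rat.
Proof.
move=> a a_neq0; exists (numq a)%:~R, (denq a)%:~R.
by split; rewrite ?intr_eq0 ?numq_eq0 ?denq_neq0 ?divq_num_den //; apply: sZ_int.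
Qed.

Lemma dpZ_total_rat : dpZ_total Zf rat.
Proof.
move=> p /sprime_rat[->|[q q_pr ->]] _ /hZ[z ->]; rewrite intr_eq0 => z_neq0; last first.
  by exists (q ^ logn q `|z|)%:R; apply/is_dpZ_ratP.
exists 1; split; first by split; [apply/sN_ratP; exists 1%N | left].
rewrite mul0r -[1]/(1%:~R) -[0]/(0%:~R) !sdvd_intP //.
by rewrite dvd1z dvd0z (negbTE z_neq0).
Qed.

Lemma dpZ_sign_injective_rat : dpZ_sign_injective Zf rat.
Proof.
move=> _ _ _ _ [/hZ[a ->] /hZ[b ->] /hZ[c ->] /hZ[d ->]].
rewrite !intr_eq0 => -[a0 b0 c0 d0] dp_eq /slt_ratP; apply: eq_of_norm_eq_mul_gt0.
have logn_eq q : logn q `|a * d| = logn q `|c * b|.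
  have [q_pr|q_npr] := boolP (prime q); last by rewrite lognE (negbTE q_npr) [RHS]lognE (negbTE q_npr).
  have [y0 [z0 [y1 [z1 []]]]] := dp_eq _ (sprime_nat q_pr).
  rewrite !is_dpZ_ratP // => -> -> -> -> /eqP.
  rewrite eqr_div ?pnatr_eq0 -?lt0n ?expn_gt0 ?prime_gt0 // -!natrM eqr_nat -!expnD.
  by rewrite eqn_exp2l ?prime_gt1 // !abszM !lognM ?absz_gt0 // => /eqP; lia.
have := eqn_from_log _ _ logn_eq; rewrite !absz_gt0 !mulf_neq0 // => /(_ isT isT) abs_eq.
rewrite !normrM !normfV -!intr_norm; apply/eqP.
by rewrite eqr_div ?intr_eq0 ?normr_eq0 // -!intrM -!normrM eqr_int -!abszE abs_eq.
Qed.

End Rationals.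

Section StarRationals.
Variables (F : fieldType) (Zf : ring_formula).

Lemma dpZ_spec (p x : F) : dpZ_total Zf F -> sprime Zf p -> sZ Zf x -> x != 0 ->
  is_dpZ Zf p x (dpZ Zf p x).
Proof. by move=> total p_pr x_Z x_neq0; apply: epsilon_spec; apply: total. Qed.

Lemma dp_fraction (a : F) : sZ_fractions Zf F -> a != 0 ->
  exists u v, [/\ sZ Zf u, sZ Zf v, u != 0, v != 0 & a = u / v] /\
              forall p, dp Zf p a = dpZ Zf p u / dpZ Zf p v.
Proof.
move=> fractions a_neq0.
pose P (ab : F * F) := [/\ sZ Zf ab.1, sZ Zf ab.2, ab.1 != 0, ab.2 != 0 & a = ab.1 / ab.2].
have /(epsilon_spec (inhabits (0, 0))) : exists ab, P ab.
  by have [u [v uv]] := fractions a a_neq0; exists (u, v).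
by exists (epsilon (inhabits (0, 0)) P).1, (epsilon (inhabits (0, 0)) P).2.
Qed.

End StarRationals.

Theorem theorem3p2 (F : fieldType) (Zf : ring_formula)
  (hF : elem_equiv_Q F) (hZ : defines_Z_in_Q Zf)
  (a0 a1 : F) (h0 : a0 != 0) (h1 : a1 != 0) :
  a0 = a1 <->
  ((forall p : F, sprime Zf p -> dp Zf p a0 = dp Zf p a1) /\
   slt Zf 0 (a0 * a1)).
Proof.
have squares := transfer hF (squares_pos_sentenceP Zf) (squares_pos_rat hZ).
have fractions := transfer hF (sZ_fractions_sentenceP Zf) (sZ_fractions_rat hZ).
have total := transfer hF (dpZ_total_sentenceP Zf) (dpZ_total_rat hZ).
have inj := transfer hF (dpZ_sign_injective_sentenceP Zf) (dpZ_sign_injective_rat hZ).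
split=> [<-|]; first by split=> //; apply: squares.
have [u0 [v0 [[u0_Z v0_Z u0_neq0 v0_neq0 ->] dp0]]] := dp_fraction fractions h0.
have [u1 [v1 [[u1_Z v1_Z u1_neq0 v1_neq0 ->] dp1]]] := dp_fraction fractions h1.
move=> [dp_eq]; apply: inj => // p p_pr.
exists (dpZ Zf p u0), (dpZ Zf p v0), (dpZ Zf p u1), (dpZ Zf p v1).
by split; rewrite -?dp0 -?dp1 ?dp_eq //; apply: dpZ_spec.
Qed.
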